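(* Consider a discrete memoryless wiretap channel with input alphabet $\mathcal X=\{1,\ldots,n\}$, main channel $p(y|x)$ and eavesdropper channel $p(z|x)$, which is dominantly cyclic shift symmetric. Then for every $\mu\ge0$, $$\sup_{U\to V\to X\to(Y,Z)}\big[\mu I(V;Y)+I(V;Y|U)-I(V;Z|U)\big]=\max_{V\to X\to(Y,Z),\ |\mathcal V|\le n}\big[(\mu+1)I(V;Y)-I(V;Z)\big],$$ (suprema over finite-alphabet auxiliary variables), i.e. rate splitting ($U$ non-constant) does not improve the rate-equivocation region and an optimal channel prefix $V$ with at most $n$ values exists. In particular the secrecy capacity satisfies $$C_s=\max_{P_x}f(P_x)-\min_{P_x}f(P_x).$$
   Context: $f(P_x)=I(X;Y)-I(X;Z)$ for $X\sim P_x$, and $C_s=\sup_{V\to X\to(Y,Z)}[I(V;Y)-I(V;Z)]$ is the secrecy capacity. A channel with input alphabet $\{1,\ldots,n\}$ is cyclic shift symmetric if $I(X;Y)$ is invariant under cyclic shifts of the input distribution; a wiretap channel is cyclic shift symmetric if both its channels are; it is dominantly cyclic shift symmetric if moreover $f(\mathbf u)\ge f(P_x)$ for all $P_x$, with $\mathbf u$ the uniform distribution. The left-hand supremum, over $\mu\ge0$, traces the upper right boundary of the rate-equivocation region. *)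

From HB Require Import structures.
From mathcomp Require Import all_boot all_order all_algebra.
From mathcomp Require Import all_classical all_reals all_analysis.
Set Implicit Arguments. Unset Strict Implicit. Unset Printing Implicit Defensive.
Import Order.TTheory GRing.Theory Num.Theory.
Local Open Scope ring_scope.

Section Info.
Variable R : realType.

Definition is_dist (A : finType) (p : A -> R) :=
  (forall a, 0 <= p a) /\ \sum_(a : A) p a = 1.

(* discrete memoryless channel = stochastic matrix W x y = p(y|x) *)
Definition is_chan (A B : finType) (W : A -> B -> R) :=
  forall a, is_dist (W a).

Definition mutinfo (A B : finType) (P : A -> B -> R) : R :=
  \sum_(a : A) \sum_(b : B)
     P a b * ln (P a b / ((\sum_(b' : B) P a b') * (\sum_(a' : A) P a' b))).

Definition condmutinfo (A B C : finType) (P : A -> B -> C -> R) : R :=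
  \sum_(a : A) \sum_(b : B) \sum_(c : C)
     P a b c * ln (P a b c * (\sum_(b' : B) \sum_(c' : C) P a b' c') /
                   ((\sum_(c' : C) P a b c') * (\sum_(b' : B) P a b' c))).

Definition through (T X B : finType) (PXV : T -> X -> R) (W : X -> B -> R)
  (v : T) (b : B) : R := \sum_(x : X) PXV v x * W x b.

Definition jointXY (X B : finType) (P : X -> R) (W : X -> B -> R) : X -> B -> R :=
  fun x b => P x * W x b.

Definition fdiff (X TY TZ : finType) (W : X -> TY -> R) (Wz : X -> TZ -> R)
  (P : X -> R) : R :=
  mutinfo (jointXY P W) - mutinfo (jointXY P Wz).

Definition jointVB (T X B : finType) (PV : T -> R) (PXV : T -> X -> R)
  (W : X -> B -> R) : T -> B -> R :=
  fun v b => PV v * through PXV W v b.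

Definition jointUVB (S T X B : finType) (PU : S -> R) (PVU : S -> T -> R)
  (PXV : T -> X -> R) (W : X -> B -> R) : S -> T -> B -> R :=
  fun u v b => PU u * PVU u v * through PXV W v b.

Definition margV (S T : finType) (PU : S -> R) (PVU : S -> T -> R) : T -> R :=
  fun v => \sum_(u : S) PU u * PVU u v.

Definition lhs_val (S T X TY TZ : finType) (mu : R)
  (W : X -> TY -> R) (Wz : X -> TZ -> R)
  (PU : S -> R) (PVU : S -> T -> R) (PXV : T -> X -> R) : R :=
  mu * mutinfo (jointVB (margV PU PVU) PXV W)
  + condmutinfo (jointUVB PU PVU PXV W) - condmutinfo (jointUVB PU PVU PXV Wz).

Definition rhs_val (T X TY TZ : finType) (mu : R)
  (W : X -> TY -> R) (Wz : X -> TZ -> R) (PV : T -> R) (PXV : T -> X -> R) : R :=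
  (mu + 1) * mutinfo (jointVB PV PXV W) - mutinfo (jointVB PV PXV Wz).

Definition secrecy_val (T X TY TZ : finType)
  (W : X -> TY -> R) (Wz : X -> TZ -> R) (PV : T -> R) (PXV : T -> X -> R) : R :=
  mutinfo (jointVB PV PXV W) - mutinfo (jointVB PV PXV Wz).

Definition is_secrecy_capacity (n : nat) (TY TZ : finType)
  (W : 'I_n -> TY -> R) (Wz : 'I_n -> TZ -> R) (c : R) :=
  (forall (k : nat) (PV : 'I_k -> R) (PXV : 'I_k -> 'I_n -> R),
      is_dist PV -> is_chan PXV -> secrecy_val W Wz PV PXV <= c) /\
  (forall eps : R, 0 < eps ->
     exists (k : nat) (PV : 'I_k -> R) (PXV : 'I_k -> 'I_n -> R),
       [/\ is_dist PV, is_chan PXV & c - eps < secrecy_val W Wz PV PXV]).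

Definition cshift (n : nat) (P : 'I_n -> R) : 'I_n -> R := fun i => P (ordS i).

Definition cyc_sym (n : nat) (B : finType) (W : 'I_n -> B -> R) :=
  forall P : 'I_n -> R, is_dist P ->
    mutinfo (jointXY (cshift P) W) = mutinfo (jointXY P W).

Definition dom_cyc_sym (n : nat) (TY TZ : finType)
  (W : 'I_n -> TY -> R) (Wz : 'I_n -> TZ -> R) :=
  [/\ cyc_sym W, cyc_sym Wz &
      forall P : 'I_n -> R, is_dist P ->
        fdiff W Wz P <= fdiff W Wz (fun _ => n%:R^-1)].

End Info.

From HB Require Import structures.
From mathcomp Require Import all_boot all_order all_algebra.
From mathcomp Require Import all_classical all_reals all_analysis.
From mathcomp Require Import ring lra.
Set Implicit Arguments. Unset Strict Implicit. Unset Printing Implicit Defensive.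
Import Order.TTheory GRing.Theory Num.Theory.
Import numFieldNormedType.Exports.
Local Open Scope ring_scope.

(* Write f_mu(P) = mu I(X;Y) + I(X;Y) - I(X;Z) for the input distribution P of
   X.  Along the Markov chain V -> X -> (Y,Z) we have I(V;Y) = I(X;Y) - E_V
   I(X;Y|V=v), so (mu+1) I(V;Y) - I(V;Z) = f_mu(P_X) - E_V f_mu(P_X|V), and the
   rate-splitting objective equals mu I(X;Y) + E_U f(P_X|U) - E_V f_mu(P_X|V).
   Cyclic shift symmetry makes I(X;Y) maximal at the uniform input u: if V is a
   uniformly random cyclic shift applied to P, then P_X = u and every shift has
   the value of P, so 0 <= I(V;Y) = I_u(X;Y) - I_P(X;Y).  Dominance makes f
   maximal at u as well.  Hence both objectives are at most f_mu(u) - min f_mu,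
   and choosing V uniform over the n cyclic shifts of a minimiser of f_mu, which
   exists by compactness of the simplex, attains this bound. *)

Section Entropy.
Variable R : realType.

Lemma ln_le_subr1 (x : R) : 0 < x -> ln x <= x - 1.
Proof.
by move=> x0; have := @le_ln1Dx R (x - 1); rewrite addrCA subrr addr0; apply; lra.
Qed.

Lemma mul_ln_div_le (a b : R) : 0 < a -> 0 < b -> a * ln (b / a) <= b - a.
Proof.
move=> a0 b0; have /(ler_wpM2l (ltW a0)) := ln_le_subr1 (divr_gt0 b0 a0).
by rewrite mulrBr mulr1 mulrCA divff ?gt_eqF // mulr1.
Qed.

Lemma ler_sum_term (A : finType) (F : A -> R) a :
  (forall a, 0 <= F a) -> F a <= \sum_a' F a'.
Proof. by move=> F0; rewrite (bigD1 a) //= lerDl sumr_ge0. Qed.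

Definition xlnx (x : R) := x * ln x.

Definition negentropy (B : finType) (q : B -> R) := \sum_b xlnx (q b).

Lemma abs_xlnx_le (s c : R) : 0 < s <= 1 -> 0 < c -> `|xlnx s| <= c + s * `|ln c|.
Proof.
case/andP=> s0 s1 c0; rewrite ler0_norm; last exact: mulr_ge0_le0 (ltW s0) (ln_le0 s1).
have := mul_ln_div_le s0 c0; rewrite ln_div ?posrE // /xlnx.
have : - (s * ln c) <= s * `|ln c|.
  by rewrite -mulrN; apply: (ler_wpM2l (ltW s0)); rewrite ler_normr lexx orbT.
lra.
Qed.

Lemma continuous_xlnx_norm : continuous (fun x : R => xlnx `|x|).
Proof.
move=> x; have [->|x0] := eqVneq x 0; last first.
  have cln : {for x, continuous (@ln R \o (Num.norm : R -> R))}.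
    apply: continuous_comp; first exact: norm_continuous.
    by apply: continuous_ln; rewrite normr_gt0.
  exact: (continuousM (@norm_continuous _ R^o x) cln).
apply/cvgrPdist_lt => e e0.
pose c := e / 2; have c0 : 0 < c by rewrite divr_gt0.
have lnc1 : 0 < `|ln c| + 1 by rewrite ltr_wpDl.
pose d := Num.min 1 (c / (`|ln c| + 1)).
have d0 : 0 < d by rewrite lt_min ltr01 divr_gt0.
apply/nbhs_ballP; exists d => // t /=; rewrite sub0r normrN => td.
rewrite /xlnx normr0 mul0r sub0r normrN.
have [->|t0] := eqVneq t 0; first by rewrite normr0 mul0r normr0.
have t1 : `|t| <= 1 by rewrite ltW // (lt_le_trans td) // ge_min lexx.
have := @abs_xlnx_le `|t| c; rewrite normr_gt0 t0 t1 => /(_ isT c0).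
have : `|t| * (`|ln c| + 1) < c.
  by rewrite -ltr_pdivlMr // (lt_le_trans td) // ge_min lexx orbT.
have := normr_ge0 t; rewrite /c /xlnx; lra.
Qed.

Lemma continuous_sum (T : topologicalType) (I : finType) (F : I -> T -> R) :
  (forall i, continuous (F i)) -> continuous (fun v => \sum_i F i v).
Proof.
move=> cF; rewrite -fct_sumE.
elim/big_ind: _ => // [x|f g cf cg x]; first exact: cvg_cst.
exact: continuousD (cf x) (cg x).
Qed.

Section Composition.
Variables (A B C : finType).
Implicit Types (p : A -> R) (K : A -> B -> R) (L : B -> C -> R).

Lemma dist_ge0 (p : A -> R) : is_dist p -> forall a, 0 <= p a.
Proof. by case. Qed.

Lemma chan_ge0 K : is_chan K -> forall a b, 0 <= K a b.
Proof. by move=> HK a; case: (HK a). Qed.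

Lemma chan_sum1 K : is_chan K -> forall a, \sum_b K a b = 1.
Proof. by move=> HK a; case: (HK a). Qed.

Lemma dist_avg_const p (c : R) : is_dist p -> \sum_a p a * c = c.
Proof. by case=> _ p1; rewrite -mulr_suml p1 mul1r. Qed.

Lemma dist_avg_le p (f : A -> R) (c : R) :
  is_dist p -> (forall a, f a <= c) -> \sum_a p a * f a <= c.
Proof.
move=> Hp fc; rewrite -[leRHS](dist_avg_const c Hp).
by apply: ler_sum => a _; rewrite ler_wpM2l // dist_ge0.
Qed.

Lemma dist_avg_ge p (f : A -> R) (c : R) :
  is_dist p -> (forall a, c <= f a) -> c <= \sum_a p a * f a.
Proof.
move=> Hp fc; rewrite -[leLHS](dist_avg_const c Hp).
by apply: ler_sum => a _; rewrite ler_wpM2l // dist_ge0.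
Qed.

Lemma sum_margV p K (h : B -> R) :
  \sum_b margV p K b * h b = \sum_a p a * \sum_b K a b * h b.
Proof.
under eq_bigr do rewrite mulr_suml.
rewrite exchange_big; apply: eq_bigr => a _; rewrite mulr_sumr.
by apply: eq_bigr => b _; rewrite mulrA.
Qed.

Lemma margVA p K L : margV (margV p K) L = margV p (fun a => margV (K a) L).
Proof. by apply: funext => c; rewrite /margV -sum_margV. Qed.

Lemma margV_ge0 p K : (forall a, 0 <= p a) -> is_chan K -> forall b, 0 <= margV p K b.
Proof. by move=> p0 HK b; apply: sumr_ge0 => a _; rewrite mulr_ge0 // chan_ge0. Qed.

Lemma margV_dist p K : is_dist p -> is_chan K -> is_dist (margV p K).
Proof.
move=> Hp HK; split; first by apply: margV_ge0 => //; exact: dist_ge0.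
under eq_bigr do rewrite -[margV _ _ _]mulr1.
rewrite sum_margV -[RHS](dist_avg_const 1 Hp); apply: eq_bigr => a _.
by under eq_bigr do rewrite mulr1; rewrite chan_sum1.
Qed.

End Composition.

Lemma through_chan (A B C : finType) (K : A -> B -> R) (L : B -> C -> R) :
  is_chan K -> is_chan L -> is_chan (through K L).
Proof. by move=> HK HL a; exact: margV_dist. Qed.

Lemma mutinfo_ge0 (A B : finType) (M : A -> B -> R) :
  (forall a b, 0 <= M a b) -> \sum_a \sum_b M a b = 1 -> 0 <= mutinfo M.
Proof.
move=> M0 M1; pose r a := \sum_b M a b; pose c b := \sum_a M a b.
have gibbs a b : M a b - r a * c b <= M a b * ln (M a b / (r a * c b)).
  have Mr : M a b <= r a by apply: ler_sum_term.
  have Mc : M a b <= c b by apply: (@ler_sum_term _ (M^~ b)).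
  move: (M0 a b); rewrite le_eqVlt => /predU1P[<-|Mab0].
    by rewrite mul0r sub0r oppr_le0 mulr_ge0 // sumr_ge0.
  have rc0 : 0 < r a * c b by rewrite mulr_gt0 // (lt_le_trans Mab0).
  rewrite -[M a b / _]invf_div lnV ?posrE ?divr_gt0 // mulrN.
  have := mul_ln_div_le Mab0 rc0; lra.
apply: (le_trans _ (ler_sum _ (fun a _ => ler_sum _ (fun b _ => gibbs a b)))).
under eq_bigr => a _ do rewrite sumrB -mulr_sumr.
by rewrite sumrB -mulr_suml M1 [\sum_b c b]exchange_big M1 mulr1 subrr.
Qed.

Lemma mutinfo_kernel_term (p k c : R) : 0 <= p -> 0 <= k -> p * k <= c ->
  p * k * ln (p * k / (p * c)) = p * xlnx k - p * k * ln c.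
Proof.
rewrite le_eqVlt => /predU1P[<-|p0]; first by rewrite !mul0r subrr.
rewrite le_eqVlt => /predU1P[<-|k0] pkc; first by rewrite /xlnx !(mulr0, mul0r) subrr.
have c0 : 0 < c by rewrite (lt_le_trans _ pkc) // mulr_gt0.
by rewrite ln_div ?posrE ?mulr_gt0 // !lnM ?posrE // /xlnx; ring.
Qed.

Lemma mutinfo_kernel (A B : finType) (p : A -> R) (K : A -> B -> R) :
  (forall a, 0 <= p a) -> is_chan K ->
  mutinfo (fun a b => p a * K a b) =
  \sum_a p a * negentropy (K a) - negentropy (margV p K).
Proof.
move=> p0 HK; rewrite /mutinfo /negentropy.
have pKc a b : p a * K a b <= \sum_a' p a' * K a' b.
  apply: (@ler_sum_term _ (fun a' => p a' * K a' b)) => a'.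
  by rewrite mulr_ge0 // chan_ge0.
under eq_bigr => a _.
  under eq_bigr => b _ do rewrite -mulr_sumr chan_sum1 // mulr1
    (mutinfo_kernel_term (p0 a) (chan_ge0 HK a b) (pKc a b)).
  rewrite sumrB -mulr_sumr.
  over.
rewrite sumrB exchange_big /=; congr (_ - _); apply: eq_bigr => b _.
by rewrite /xlnx mulr_suml.
Qed.

Lemma condmutinfo_mixture (A B C : finType) (p : A -> R) (Q : A -> B -> C -> R) :
  (forall a, \sum_b \sum_c Q a b c = 1) ->
  condmutinfo (fun a b c => p a * Q a b c) = \sum_a p a * mutinfo (Q a).
Proof.
move=> Q1; apply: eq_bigr => a _; rewrite /mutinfo.
have [->|p0] := eqVneq (p a) 0.
  by rewrite mul0r big1 // => b _; rewrite big1 // => c _; rewrite !mul0r.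
have -> : \sum_b \sum_c p a * Q a b c = p a.
  by rewrite -[RHS]mulr1 -(Q1 a) mulr_sumr; apply: eq_bigr => b _; rewrite mulr_sumr.
rewrite mulr_sumr; apply: eq_bigr => b _; rewrite mulr_sumr; apply: eq_bigr => c _.
rewrite -!mulr_sumr -mulrA; congr (_ * (_ * ln _)).
rewrite !invfM -[X in _ = X]mulr1 -(expr1n R 2) -(divff p0); ring.
Qed.

Section Channel.
Variables (X B : finType) (W : X -> B -> R).
Hypothesis HW : is_chan W.

Lemma mutinfo_jointXY (P : X -> R) : (forall x, 0 <= P x) ->
  mutinfo (jointXY P W) = \sum_x P x * negentropy (W x) - negentropy (margV P W).
Proof. by move=> P0; apply: mutinfo_kernel. Qed.

Variables (T : finType) (PXV : T -> X -> R).
Hypothesis HPXV : is_chan PXV.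

Lemma jointVB_sum1 (PV : T -> R) : is_dist PV -> \sum_v \sum_b jointVB PV PXV W v b = 1.
Proof.
move=> HPV; rewrite -[RHS](dist_avg_const 1 HPV); apply: eq_bigr => v _.
by rewrite -mulr_sumr (chan_sum1 (through_chan HPXV HW)).
Qed.

Lemma mutinfo_jointVB_ge0 (PV : T -> R) : is_dist PV -> 0 <= mutinfo (jointVB PV PXV W).
Proof.
move=> HPV; apply: mutinfo_ge0 (jointVB_sum1 HPV) => v b.
by rewrite mulr_ge0 ?(dist_ge0 HPV) ?(chan_ge0 (through_chan HPXV HW)).
Qed.

Lemma mutinfo_jointVB (PV : T -> R) : (forall v, 0 <= PV v) ->
  mutinfo (jointVB PV PXV W) =
  mutinfo (jointXY (margV PV PXV) W) - \sum_v PV v * mutinfo (jointXY (PXV v) W).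
Proof.
move=> PV0; rewrite [LHS](mutinfo_kernel PV0 (through_chan HPXV HW)).
rewrite (mutinfo_jointXY (margV_ge0 PV0 HPXV)) margVA.
under [X in _ = _ - X]eq_bigr => v _ do
  rewrite (mutinfo_jointXY (dist_ge0 (HPXV v))) mulrBr.
by rewrite sumrB sum_margV; ring.
Qed.

Lemma condmutinfo_jointUVB (S : finType) (PU : S -> R) (PVU : S -> T -> R) :
  is_chan PVU ->
  condmutinfo (jointUVB PU PVU PXV W) = \sum_u PU u * mutinfo (jointVB (PVU u) PXV W).
Proof.
move=> HPVU; rewrite -(condmutinfo_mixture PU (Q := fun u => jointVB (PVU u) PXV W)).
  by congr condmutinfo; do 3!apply: funext => ?; rewrite /jointUVB /jointVB mulrA.
by move=> u; apply: jointVB_sum1.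
Qed.

End Channel.

Section Inputs.
Variable n : nat.
Hypothesis n_gt0 : (0 < n)%N.

Definition shift (j : nat) (P : 'I_n -> R) := iter j (@cshift R n) P.

Definition unif : 'I_n -> R := fun _ => n%:R^-1.

Lemma shiftE j P x : shift j P x = P (iter j (@ordS n) x).
Proof.
elim: j x => [//|j IH] x.
by rewrite /shift iterS {1}/cshift -/(shift j P) IH -iterSr.
Qed.

Lemma iter_ordS_val j (x : 'I_n) : val (iter j (@ordS n) x) = ((x + j) %% n)%N.
Proof.
elim: j => [|j IH]; first by rewrite addn0 modn_small.
by rewrite iterS /= IH -addn1 modnDml addn1 addnS.
Qed.

Lemma iter_ordS_inj (x : 'I_n) : injective (fun j : 'I_n => iter j (@ordS n) x).
Proof.
move=> j k /(congr1 val); rewrite !iter_ordS_val => /eqP.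
by rewrite eqn_modDl !modn_small // => /eqP /val_inj.
Qed.

Lemma sum_shift P x : \sum_(j < n) shift j P x = \sum_y P y.
Proof.
rewrite [RHS](reindex_inj (iter_ordS_inj (x := x))); apply: eq_bigr => j _.
by rewrite shiftE.
Qed.

Lemma shift_dist j P : is_dist P -> is_dist (shift j P).
Proof.
move=> HP; elim: j => [//|j [P0 P1]]; split; first by move=> x; exact: P0.
by rewrite -P1 [RHS](reindex_inj (@ordS_inj n)).
Qed.

Lemma shift_chan P : is_dist P -> is_chan (fun j : 'I_n => shift j P).
Proof. by move=> HP j; exact: shift_dist. Qed.

Lemma mutinfo_shift (B : finType) (W : 'I_n -> B -> R) j P :
  cyc_sym W -> is_dist P -> mutinfo (jointXY (shift j P) W) = mutinfo (jointXY P W).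
Proof.
move=> Hc HP; elim: j => [//|j IH].
by rewrite /shift iterS Hc ?IH //; exact: shift_dist.
Qed.

Lemma unif_dist : is_dist unif.
Proof.
split=> [i|]; first by rewrite invr_ge0 ler0n.
by rewrite sumr_const card_ord -(mulr_natr n%:R^-1) mulVf // pnatr_eq0 -lt0n.
Qed.

Lemma margV_unif_shift P : is_dist P -> margV unif (fun j : 'I_n => shift j P) = unif.
Proof.
by case=> _ P1; apply: funext => x; rewrite /margV -mulr_sumr sum_shift P1 mulr1.
Qed.

Lemma mutinfo_le_unif (B : finType) (W : 'I_n -> B -> R) P :
  is_chan W -> cyc_sym W -> is_dist P ->
  mutinfo (jointXY P W) <= mutinfo (jointXY unif W).
Proof.
move=> HW Hc HP; have := mutinfo_jointVB_ge0 HW (shift_chan HP) unif_dist.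
rewrite (mutinfo_jointVB HW (shift_chan HP) (dist_ge0 unif_dist)) margV_unif_shift //.
under eq_bigr do rewrite mutinfo_shift //.
by rewrite (dist_avg_const _ unif_dist) subr_ge0.
Qed.

Lemma simplex_compact :
  compact [set v : 'rV[R]_n | is_dist (fun i => v ord0 i)]%classic.
Proof.
have -> : [set v : 'rV[R]_n | is_dist (fun i => v ord0 i)]%classic =
    ([set v | forall i, `[(0 : R), 1]%classic (v ord0 i)] `&`
     (fun v => \sum_i v ord0 i) @^-1` [set 1])%classic.
  apply/seteqP; split=> v /=.
    case=> v0 v1; split=> // i; rewrite in_itv /= v0 -v1.
    exact: (@ler_sum_term _ (fun i => v ord0 i)).
  by case=> v01 v1; split=> // i; have /andP[] := v01 i.
apply: compact_closedI.
  by apply: (@rV_compact _ _ (fun=> `[(0 : R), 1]%classic)) => i; exact: segment_compact.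
apply: preimage_closed; last exact: closed_eq.
by move=> v _; apply: continuous_sum => i; exact: coord_continuous.
Qed.

(* Through the absolute values, [F] is only ever evaluated at nonnegative
   vectors, where the logarithms inside mutual information are harmless, yet the
   hypothesis is plain continuity on 'rV as required by [EVT_min_rV]. *)
Lemma dist_argmin (F : ('I_n -> R) -> R) :
  continuous (fun v : 'rV[R]_n => F (fun i => `|v ord0 i|)) ->
  exists2 Pm, is_dist Pm & forall P, is_dist P -> F Pm <= F P.
Proof.
move=> cF.
have rowE (P : 'I_n -> R) : (fun i => (\row_j P j) ord0 i) = P.
  by apply: funext => i; rewrite mxE.
have row_absE (P : 'I_n -> R) : is_dist P -> (fun i => `|(\row_j P j) ord0 i|) = P.
  by move=> HP; apply: funext => i; rewrite mxE ger0_norm // (dist_ge0 HP).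
have [|c /set_mem Sc c_min] := EVT_min_rV _ simplex_compact (continuous_subspaceT cF).
  by exists (\row_j unif j); rewrite /= rowE; exact: unif_dist.
have c_absE : (fun i => `|c ord0 i|) = (fun i => c ord0 i).
  by apply: funext => i; rewrite ger0_norm // (dist_ge0 Sc).
exists (fun i => c ord0 i) => // P HP.
by have := c_min (\row_j P j); rewrite inE /= rowE c_absE row_absE //; apply.
Qed.

Lemma continuous_mutinfo_abs (B : finType) (W : 'I_n -> B -> R) : is_chan W ->
  continuous (fun v : 'rV[R]_n => mutinfo (jointXY (fun i => `|v ord0 i|) W)).
Proof.
move=> HW.
have absv_ge0 (v : 'rV[R]_n) i : 0 <= `|v ord0 i| by [].
have -> : (fun v : 'rV[R]_n => mutinfo (jointXY (fun i => `|v ord0 i|) W)) =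
   fun v => \sum_x `|v ord0 x| * negentropy (W x)
          - \sum_b xlnx `|margV (fun i => `|v ord0 i|) W b|.
  apply: funext => v; rewrite (mutinfo_jointXY HW (absv_ge0 v)); congr (_ - _).
  by apply: eq_bigr => b _; rewrite ger0_norm // margV_ge0.
have c_abs x : continuous (fun v : 'rV[R]_n => `|v ord0 x|).
  by move=> v; apply: continuous_comp; [exact: coord_continuous | exact: norm_continuous].
have c_absM x (k : R) : continuous (fun v : 'rV[R]_n => `|v ord0 x| * k).
  move=> v; apply: (@continuousM _ _ (fun v : 'rV[R]_n => `|v ord0 x|) (fun=> k)).
    exact: c_abs.
  exact: cst_continuous.
move=> v; apply: continuousB; first by apply: continuous_sum => x; exact: c_absM.
apply: continuous_sum => b {}v.
apply: (@continuous_comp _ _ _ (fun v : 'rV[R]_n => margV (fun i => `|v ord0 i|) W b)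
                         (fun y => xlnx `|y|)).
  by apply: continuous_sum => x; exact: c_absM.
exact: continuous_xlnx_norm.
Qed.

Section Wiretap.
Variables (TY TZ : finType) (W : 'I_n -> TY -> R) (Wz : 'I_n -> TZ -> R).
Hypotheses (HW : is_chan W) (HWz : is_chan Wz) (Hd : dom_cyc_sym W Wz).

Definition fmu (mu : R) (P : 'I_n -> R) := mu * mutinfo (jointXY P W) + fdiff W Wz P.

Lemma fmu0 P : fmu 0 P = fdiff W Wz P.
Proof. by rewrite /fmu mul0r add0r. Qed.

Lemma rhs_val0 (T : finType) (PV : T -> R) (PXV : T -> 'I_n -> R) :
  rhs_val 0 W Wz PV PXV = secrecy_val W Wz PV PXV.
Proof. by rewrite /rhs_val add0r mul1r. Qed.

Lemma fmu_le_unif mu P : 0 <= mu -> is_dist P -> fmu mu P <= fmu mu unif.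
Proof.
case: Hd => cW _ dom mu0 HP; rewrite /fmu lerD ?dom //.
by apply: ler_wpM2l => //; exact: mutinfo_le_unif.
Qed.

Lemma fmu_shift mu j P : is_dist P -> fmu mu (shift j P) = fmu mu P.
Proof. by case: Hd => cW cWz _ HP; rewrite /fmu /fdiff !mutinfo_shift. Qed.

Lemma continuous_fmu_abs mu :
  continuous (fun v : 'rV[R]_n => fmu mu (fun i => `|v ord0 i|)).
Proof.
have cY := continuous_mutinfo_abs HW; have cZ := continuous_mutinfo_abs HWz.
move=> v; apply: (@continuousD _ _ _
  (fun v : 'rV[R]_n => mu * mutinfo (jointXY (fun i => `|v ord0 i|) W))); last first.
  exact: (continuousB (cY v) (cZ v)).
by apply: (@continuousM _ _ (fun=> mu)); [exact: cst_continuous | exact: cY].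
Qed.

Lemma rhs_valE mu (T : finType) (PV : T -> R) (PXV : T -> 'I_n -> R) :
  (forall v, 0 <= PV v) -> is_chan PXV ->
  rhs_val mu W Wz PV PXV = fmu mu (margV PV PXV) - \sum_v PV v * fmu mu (PXV v).
Proof.
move=> PV0 HPXV.
rewrite /rhs_val (mutinfo_jointVB HW HPXV PV0) (mutinfo_jointVB HWz HPXV PV0).
rewrite /fmu /fdiff; under [X in _ = _ - X]eq_bigr do rewrite mulrDr mulrBr mulrCA.
by rewrite big_split sumrB -mulr_sumr /=; ring.
Qed.

Lemma lhs_valE mu (S T : finType) (PU : S -> R) (PVU : S -> T -> R)
    (PXV : T -> 'I_n -> R) :
  is_dist PU -> is_chan PVU -> is_chan PXV ->
  lhs_val mu W Wz PU PVU PXV =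
  mu * mutinfo (jointXY (margV (margV PU PVU) PXV) W)
  + \sum_u PU u * fdiff W Wz (margV (PVU u) PXV)
  - \sum_v margV PU PVU v * fmu mu (PXV v).
Proof.
move=> HPU HPVU HPXV.
rewrite /lhs_val !condmutinfo_jointUVB //.
rewrite (mutinfo_jointVB HW HPXV (margV_ge0 (dist_ge0 HPU) HPVU)).
under [X in _ + X - _ = _]eq_bigr => u _ do
  rewrite (mutinfo_jointVB HW HPXV (dist_ge0 (HPVU u))) mulrBr.
under [X in _ - X = _]eq_bigr => u _ do
  rewrite (mutinfo_jointVB HWz HPXV (dist_ge0 (HPVU u))) mulrBr.
rewrite !sumrB -!sum_margV /fmu /fdiff.
under [X in _ = _ - X]eq_bigr do rewrite mulrDr mulrBr mulrCA.
under [X in _ = _ + X - _]eq_bigr do rewrite mulrBr.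
by rewrite sumrB big_split sumrB -mulr_sumr /=; ring.
Qed.

Section Optimum.
Variables (mu : R) (Pm : 'I_n -> R).
Hypotheses (mu0 : 0 <= mu) (Pm_min : forall P, is_dist P -> fmu mu Pm <= fmu mu P).

Lemma rhs_val_le (T : finType) (PV : T -> R) (PXV : T -> 'I_n -> R) :
  is_dist PV -> is_chan PXV -> rhs_val mu W Wz PV PXV <= fmu mu unif - fmu mu Pm.
Proof.
move=> HPV HPXV; rewrite (rhs_valE mu (dist_ge0 HPV) HPXV).
apply: lerB; first exact: fmu_le_unif (margV_dist HPV HPXV).
by apply: dist_avg_ge => // v; exact: Pm_min.
Qed.

Lemma lhs_val_le (S T : finType) (PU : S -> R) (PVU : S -> T -> R)
    (PXV : T -> 'I_n -> R) :
  is_dist PU -> is_chan PVU -> is_chan PXV ->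
  lhs_val mu W Wz PU PVU PXV <= fmu mu unif - fmu mu Pm.
Proof.
move=> HPU HPVU HPXV; rewrite lhs_valE //; case: Hd => cW _ dom.
have HV := margV_dist HPU HPVU.
have rateY : mu * mutinfo (jointXY (margV (margV PU PVU) PXV) W)
    <= mu * mutinfo (jointXY unif W).
  by apply: ler_wpM2l => //; apply: mutinfo_le_unif => //; exact: margV_dist.
have secr : \sum_u PU u * fdiff W Wz (margV (PVU u) PXV) <= fdiff W Wz unif.
  by apply: dist_avg_le => // u; apply: dom; exact: margV_dist.
have fmin : fmu mu Pm <= \sum_v margV PU PVU v * fmu mu (PXV v).
  by apply: dist_avg_ge => // v; exact: Pm_min.
rewrite /fmu in fmin *; lra.
Qed.

End Optimum.

Lemma rhs_val_shifts mu Pm : is_dist Pm ->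
  rhs_val mu W Wz unif (fun j => shift j Pm) = fmu mu unif - fmu mu Pm.
Proof.
move=> HPm; rewrite (rhs_valE mu (dist_ge0 unif_dist) (shift_chan HPm)).
rewrite margV_unif_shift //; under eq_bigr do rewrite fmu_shift //.
by rewrite (dist_avg_const _ unif_dist).
Qed.

End Wiretap.

End Inputs.

End Entropy.

Theorem corollary1 (R : realType) (n : nat) (TY TZ : finType)
  (W : 'I_n -> TY -> R) (Wz : 'I_n -> TZ -> R) :
  (0 < n)%N -> is_chan W -> is_chan Wz -> dom_cyc_sym W Wz ->
  (forall mu : R, 0 <= mu ->
     exists (k : nat) (PV : 'I_k -> R) (PXV : 'I_k -> 'I_n -> R),
       [/\ (k <= n)%N, is_dist PV, is_chan PXV,
           (* rhs_val at (PV,PXV) bounds every rate-splitting value: sup LHS <= it *)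
           (forall (m k' : nat) (PU : 'I_m -> R) (PVU : 'I_m -> 'I_k' -> R)
                   (PXV' : 'I_k' -> 'I_n -> R),
              is_dist PU -> is_chan PVU -> is_chan PXV' ->
              lhs_val mu W Wz PU PVU PXV' <= rhs_val mu W Wz PV PXV) &
           (* and it is the maximum over prefixes V with |V| <= n *)
           (forall (k' : nat) (PV' : 'I_k' -> R) (PXV' : 'I_k' -> 'I_n -> R),
              (k' <= n)%N -> is_dist PV' -> is_chan PXV' ->
              rhs_val mu W Wz PV' PXV' <= rhs_val mu W Wz PV PXV)]) /\
  (exists Pmax Pmin : 'I_n -> R,
     [/\ is_dist Pmax, is_dist Pmin,
         (forall P, is_dist P -> fdiff W Wz P <= fdiff W Wz Pmax),
         (forall P, is_dist P -> fdiff W Wz Pmin <= fdiff W Wz P) &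
         is_secrecy_capacity W Wz (fdiff W Wz Pmax - fdiff W Wz Pmin)]).
Proof.
move=> n_gt0 HW HWz Hd.
have argmin (mu : R) := dist_argmin n_gt0 (continuous_fmu_abs HW HWz (mu := mu)).
split=> [mu mu0|].
  have [Pm HPm Pm_min] := argmin mu.
  exists n, (@unif R n), (fun j => shift j Pm); split=> //.
  - exact: unif_dist.
  - exact: shift_chan.
  - move=> m k PU PVU PXV HPU HPVU HPXV; rewrite rhs_val_shifts //.
    exact: lhs_val_le.
  - move=> k PV PXV _ HPV HPXV; rewrite rhs_val_shifts //.
    exact: rhs_val_le.
have [Pm HPm Pm_min] := argmin 0.
have fdiff_min P : is_dist P -> fdiff W Wz Pm <= fdiff W Wz P.
  by move=> HP; rewrite -!fmu0; exact: Pm_min.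
exists (@unif R n), Pm; split=> //.
- exact: unif_dist.
- by case: Hd.
- split=> [k PV PXV HPV HPXV|eps eps0].
    by rewrite -rhs_val0 -!fmu0; exact: rhs_val_le.
  exists n, (@unif R n), (fun j => shift j Pm); split.
  + exact: unif_dist.
  + exact: shift_chan.
  + by rewrite -rhs_val0 rhs_val_shifts // !fmu0 ltrBlDr ltrDl.
Qed.
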